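(* Let $H=\langle a,b \mid c=[b,a],\ [c,a]=[c,b]=1\rangle$. Then $PJ(H)=J_0(H)$.
   Context: $[x,y]=x^{-1}y^{-1}xy$; $H\cong UT(3,\mathbb{Z})$ and each element is uniquely $a^mb^nc^k$, $m,n,k\in\mathbb{Z}$. $PJ(H)$ is the space of functions $f\colon H\to\mathbb{R}$ such that for some $\delta>0$, $|f(xy)+f(xy^{-1})-2f(x)|\le\delta$ for all $x,y\in H$, and $f(x^n)=nf(x)$ for all $x\in H$, $n\in\mathbb{Z}$. $J_0(H)$ is the space of $f\colon H\to\mathbb{R}$ with $f(xy)+f(xy^{-1})=2f(x)$ for all $x,y$ and $f(1)=0$. *)

From Stdlib Require Import Reals ZArith Lia Lra.
Open Scope R_scope.

(* The discrete Heisenberg group H = < a, b | c = [b,a], [c,a] = [c,b] = 1 >,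
   with [x,y] = x^-1 y^-1 x y, realised via the unique normal form a^m b^n c^k,
   encoded as the triple (m, n, k).  From c = [b,a] we get b a = a b c, and c is
   central, hence  b^n a^p = a^p b^n c^(n p)  and
     (a^m b^n c^k)(a^p b^q c^l) = a^(m+p) b^(n+q) c^(k+l+n p). *)
Definition H : Type := (Z * Z * Z)%type.

Definition hmul (x y : H) : H :=
  match x, y with
  | (m, n, k), (p, q, l) => ((m + p)%Z, (n + q)%Z, (k + l + n * p)%Z)
  end.

Definition hone : H := (0%Z, 0%Z, 0%Z).

Definition hinv (x : H) : H :=
  match x with
  | (m, n, k) => ((- m)%Z, (- n)%Z, (m * n - k)%Z)
  end.

Definition ga : H := (1%Z, 0%Z, 0%Z).
Definition gb : H := (0%Z, 1%Z, 0%Z).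
Definition gc : H := (0%Z, 0%Z, 1%Z).

Definition hcomm (x y : H) : H := hmul (hmul (hinv x) (hinv y)) (hmul x y).

Fixpoint hpow_nat (x : H) (n : nat) : H :=
  match n with
  | O => hone
  | S n' => hmul x (hpow_nat x n')
  end.

Definition hpow (x : H) (n : Z) : H :=
  match n with
  | Z0 => hone
  | Zpos p => hpow_nat x (Pos.to_nat p)
  | Zneg p => hinv (hpow_nat x (Pos.to_nat p))
  end.

Lemma H_rel_c : gc = hcomm gb ga. Proof. reflexivity. Qed.
Lemma H_rel_ca : hcomm gc ga = hone. Proof. reflexivity. Qed.
Lemma H_rel_cb : hcomm gc gb = hone. Proof. reflexivity. Qed.
Lemma H_assoc : forall x y z, hmul (hmul x y) z = hmul x (hmul y z).
Proof. intros [[m n] k] [[p q] l] [[r s] t]; simpl; apply f_equal2; [apply f_equal2|]; lia. Qed.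
Lemma H_inv_l : forall x, hmul (hinv x) x = hone.
Proof. intros [[m n] k]; unfold hmul, hinv, hone; apply f_equal2; [apply f_equal2|]; lia. Qed.
Lemma H_one_l : forall x, hmul hone x = x.
Proof. intros [[m n] k]; unfold hmul, hone; apply f_equal2; [apply f_equal2|]; lia. Qed.

Definition PJ (f : H -> R) : Prop :=
  (exists delta : R, delta > 0 /\
     forall x y : H,
       Rabs (f (hmul x y) + f (hmul x (hinv y)) - 2 * f x) <= delta) /\
  (forall (x : H) (n : Z), f (hpow x n) = IZR n * f x).

Definition J0 (f : H -> R) : Prop :=
  (forall x y : H, f (hmul x y) + f (hmul x (hinv y)) = 2 * f x) /\
  f hone = 0.

From Stdlib Require Import Reals ZArith Lia Lra.
Open Scope R_scope.

(* A homogeneous quasi-Jordan f stays within bounded distance of the function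
   L(a^m b^n c^k) = m f(a) + n f(b) + (k - m n / 2) f(c), which is itself
   homogeneous and Jordan.  Then f - L is bounded and homogeneous, hence zero.
   Conversely, a Jordan function vanishing at 1 is odd and satisfies
   f(x^(N+1)) + f(x^(N-1)) = 2 f(x^N), hence is homogeneous. *)

Lemma Rabs_le_iff x a : Rabs x <= a <-> - a <= x <= a.
Proof. unfold Rabs; destruct (Rcase_abs x); split; intros; lra. Qed.

Lemma bounded_Z_multiples_eq_0 a C : (forall N : Z, Rabs (IZR N * a) <= C) -> a = 0.
Proof.
  intro bounded; destruct (Req_dec a 0) as [|a_neq0]; [assumption|exfalso].
  assert (a_pos : 0 < Rabs a) by now apply Rabs_pos_lt.
  set (N := up (C / Rabs a)).
  assert (N_gt : C / Rabs a < IZR N) by apply archimed.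
  assert (C < IZR N * Rabs a).
  { apply (Rmult_lt_compat_r (Rabs a)) in N_gt; [|exact a_pos].
    unfold Rdiv in N_gt; rewrite Rmult_assoc, Rinv_l, Rmult_1_r in N_gt; lra. }
  specialize (bounded N); rewrite Rabs_mult in bounded.
  pose proof (Rle_abs (IZR N)); nra.
Qed.

Ltac heis_eq := apply f_equal2; [apply f_equal2|]; ring.

Lemma hmul_one_r x : hmul x hone = x.
Proof. destruct x as [[m n] k]; unfold hmul, hone; heis_eq. Qed.

Lemma hmul_inv_r x : hmul x (hinv x) = hone.
Proof. destruct x as [[m n] k]; unfold hmul, hinv, hone; heis_eq. Qed.

Lemma hinv_hmul_inv_r x y : hinv (hmul y (hinv x)) = hmul x (hinv y).
Proof. destruct x as [[m n] k], y as [[p q] l]; unfold hmul, hinv; heis_eq. Qed.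

Lemma hpow_nat_succ_r x N : hmul (hpow_nat x N) x = hpow_nat x (S N).
Proof.
  induction N as [|N IH]; cbn [hpow_nat].
  - now rewrite H_one_l, hmul_one_r.
  - now rewrite H_assoc, IH.
Qed.

Lemma hpow_m1 x : hpow x (-1) = hinv x.
Proof. simpl; now rewrite hmul_one_r. Qed.

Lemma hpow_nat_form m n k N : exists t,
  hpow_nat (m, n, k) N
  = (Z.of_nat N * m, Z.of_nat N * n, Z.of_nat N * k + m * n * t)%Z
  /\ (2 * t = Z.of_nat N * (Z.of_nat N - 1))%Z.
Proof.
  induction N as [|N [t [E t_eq]]].
  - exists 0%Z; simpl; split; [unfold hone; heis_eq | reflexivity].
  - exists (t + Z.of_nat N)%Z; cbn [hpow_nat]; rewrite E, Nat2Z.inj_succ.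
    unfold hmul, Z.succ; split; [heis_eq | lia].
Qed.

Lemma hpow_form m n k N : exists t,
  hpow (m, n, k) N = (N * m, N * n, N * k + m * n * t)%Z /\ (2 * t = N * (N - 1))%Z.
Proof.
  destruct N as [|p|p]; cbn [hpow].
  - exists 0%Z; split; [unfold hone; heis_eq | reflexivity].
  - destruct (hpow_nat_form m n k (Pos.to_nat p)) as [t [-> t_eq]].
    rewrite positive_nat_Z in *; now exists t.
  - destruct (hpow_nat_form m n k (Pos.to_nat p)) as [t [-> t_eq]].
    rewrite positive_nat_Z in *; exists (Z.pos p * Z.pos p - t)%Z.
    unfold hinv; change (Z.neg p) with (- Z.pos p)%Z; split; [heis_eq | lia].
Qed.

Lemma hpow_degenerate m n k N :
  (m * n = 0)%Z -> hpow (m, n, k) N = (N * m, N * n, N * k)%Z.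
Proof.
  intro mn0; destruct (hpow_form m n k N) as [t [-> _]].
  rewrite mn0; heis_eq.
Qed.

(* The shift by -mn/2 makes the central coordinate homogeneous and turns
   L into a Jordan function. *)
Definition jordan_fun (al be gm : R) (x : H) : R :=
  match x with
  | (m, n, k) => IZR m * al + IZR n * be + (IZR k - IZR m * IZR n / 2) * gm
  end.

Lemma jordan_fun_J0 al be gm : J0 (jordan_fun al be gm).
Proof.
  split.
  - intros [[m n] k] [[p q] l]; unfold hmul, hinv, jordan_fun.
    rewrite ?plus_IZR, ?minus_IZR, ?mult_IZR, ?opp_IZR; field.
  - unfold jordan_fun; simpl; field.
Qed.

Lemma jordan_fun_hpow al be gm x N :
  jordan_fun al be gm (hpow x N) = IZR N * jordan_fun al be gm x.
Proof.
  destruct x as [[m n] k]; destruct (hpow_form m n k N) as [t [-> t_eq]].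
  apply (f_equal IZR) in t_eq; rewrite !mult_IZR, minus_IZR in t_eq.
  unfold jordan_fun; rewrite !plus_IZR, !mult_IZR.
  replace (IZR t) with (IZR N * (IZR N - 1) / 2) by lra.
  field.
Qed.

Lemma J0_eq_compat f g : (forall x, f x = g x) -> J0 g -> J0 f.
Proof.
  intros f_eq [g_jordan g_one]; split.
  - intros x y; rewrite !f_eq; apply g_jordan.
  - now rewrite f_eq.
Qed.

Section HomogeneousQuasiJordan.

Variables (f : H -> R) (d : R).
Hypothesis f_quasi_jordan :
  forall x y, Rabs (f (hmul x y) + f (hmul x (hinv y)) - 2 * f x) <= d.
Hypothesis f_hom : forall x N, f (hpow x N) = IZR N * f x.

Lemma hom_inv x : f (hinv x) = - f x.
Proof. rewrite <- hpow_m1, f_hom; simpl; ring. Qed.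

Lemma hom_degenerate m n k N :
  (m * n = 0)%Z -> f (N * m, N * n, N * k)%Z = IZR N * f (m, n, k).
Proof. intro mn0; now rewrite <- hpow_degenerate, f_hom. Qed.

Lemma hom_a_pow m : f (m, 0, 0)%Z = IZR m * f ga.
Proof.
  replace (m, 0, 0)%Z with (m * 1, m * 0, m * 0)%Z by heis_eq.
  now apply hom_degenerate.
Qed.

Lemma hom_b_pow n : f (0, n, 0)%Z = IZR n * f gb.
Proof.
  replace (0, n, 0)%Z with (n * 0, n * 1, n * 0)%Z by heis_eq.
  now apply hom_degenerate.
Qed.

Lemma hom_c_pow k : f (0, 0, k)%Z = IZR k * f gc.
Proof.
  replace (0, 0, k)%Z with (k * 0, k * 0, k * 1)%Z by heis_eq.
  now apply hom_degenerate.
Qed.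

Lemma quasi_jordan_swap x y :
  Rabs (f (hmul x y) + f (hmul y x) - 2 * f x - 2 * f y) <= 2 * d.
Proof.
  pose proof (f_quasi_jordan x y) as Qxy; pose proof (f_quasi_jordan y x) as Qyx.
  rewrite <- (hinv_hmul_inv_r y x), hom_inv in Qyx.
  apply Rabs_le_iff in Qxy; apply Rabs_le_iff in Qyx; apply Rabs_le_iff; lra.
Qed.

Lemma central_shift_bound m n k :
  Rabs (f (m, n, k) - f (m, n, 0%Z) - IZR k * f gc) <= d.
Proof.
  pose proof (quasi_jordan_swap (m, n, 0%Z) (0, 0, k)%Z) as Q.
  replace (hmul (m, n, 0%Z) (0, 0, k)%Z) with (m, n, k) in Q by (unfold hmul; heis_eq).
  replace (hmul (0, 0, k)%Z (m, n, 0%Z)) with (m, n, k) in Q by (unfold hmul; heis_eq).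
  rewrite hom_c_pow in Q.
  apply Rabs_le_iff in Q; apply Rabs_le_iff; lra.
Qed.

Lemma planar_bound m n :
  Rabs (2 * f (m, n, 0%Z) + IZR m * IZR n * f gc
        - 2 * IZR m * f ga - 2 * IZR n * f gb) <= 3 * d.
Proof.
  pose proof (quasi_jordan_swap (m, 0, 0)%Z (0, n, 0)%Z) as Q.
  replace (hmul (m, 0, 0)%Z (0, n, 0)%Z) with (m, n, 0%Z) in Q by (unfold hmul; heis_eq).
  replace (hmul (0, n, 0)%Z (m, 0, 0)%Z) with (m, n, (m * n)%Z) in Q by (unfold hmul; heis_eq).
  pose proof (central_shift_bound m n (m * n)) as S; rewrite mult_IZR in S.
  rewrite hom_a_pow, hom_b_pow in Q.
  apply Rabs_le_iff in Q; apply Rabs_le_iff in S; apply Rabs_le_iff; lra.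
Qed.

Lemma near_jordan_fun x : Rabs (f x - jordan_fun (f ga) (f gb) (f gc) x) <= 3 * d.
Proof.
  destruct x as [[m n] k]; unfold jordan_fun.
  pose proof (central_shift_bound m n k) as S; pose proof (planar_bound m n) as P.
  apply Rabs_le_iff in S; apply Rabs_le_iff in P; apply Rabs_le_iff; lra.
Qed.

Lemma eq_jordan_fun x : f x = jordan_fun (f ga) (f gb) (f gc) x.
Proof.
  apply Rminus_diag_uniq, (bounded_Z_multiples_eq_0 _ (3 * d)); intro N.
  rewrite Rmult_minus_distr_l, <- f_hom, <- jordan_fun_hpow.
  apply near_jordan_fun.
Qed.

End HomogeneousQuasiJordan.

Section Jordan.

Variable f : H -> R.
Hypothesis f_jordan : forall x y, f (hmul x y) + f (hmul x (hinv y)) = 2 * f x.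
Hypothesis f_one : f hone = 0.

Lemma jordan_inv y : f (hinv y) = - f y.
Proof. pose proof (f_jordan hone y) as J; rewrite !H_one_l, f_one in J; lra. Qed.

Lemma jordan_hpow_nat x N : f (hpow_nat x N) = INR N * f x.
Proof.
  enough (f (hpow_nat x N) = INR N * f x /\ f (hpow_nat x (S N)) = INR (S N) * f x)
    by tauto.
  induction N as [|N [IH IHS]].
  - cbn [hpow_nat]; rewrite hmul_one_r, f_one; split; simpl; ring.
  - split; [exact IHS|].
    assert (pred : hmul (hpow_nat x (S N)) (hinv x) = hpow_nat x N).
    { now rewrite <- hpow_nat_succ_r, H_assoc, hmul_inv_r, hmul_one_r. }
    pose proof (f_jordan (hpow_nat x (S N)) x) as J.
    rewrite hpow_nat_succ_r, pred, IH, IHS in J.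
    rewrite !S_INR in *; lra.
Qed.

Lemma jordan_hpow x N : f (hpow x N) = IZR N * f x.
Proof.
  destruct N as [|p|p]; cbn [hpow].
  - rewrite f_one; ring.
  - now rewrite jordan_hpow_nat, INR_IZR_INZ, positive_nat_Z.
  - rewrite jordan_inv, jordan_hpow_nat, INR_IZR_INZ, positive_nat_Z.
    change (Z.neg p) with (- Z.pos p)%Z; rewrite opp_IZR; ring.
Qed.

End Jordan.

Theorem lemma3p10 : forall f : H -> R, PJ f <-> J0 f.
Proof.
  intro f; split.
  - intros [[d [_ f_quasi_jordan]] f_hom].
    apply (J0_eq_compat _ _ (eq_jordan_fun f d f_quasi_jordan f_hom)).
    apply jordan_fun_J0.
  - intros [f_jordan f_one]; split.
    + exists 1; split; [lra|].
      intros x y; rewrite f_jordan, Rminus_diag, Rabs_R0; lra.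
    + exact (jordan_hpow f f_jordan f_one).
Qed.
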